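(* Let $X$ be a finite-dimensional real Hilbert space and $A,B$ closed convex subsets of $X$ with $\operatorname{ri}A\cap\operatorname{ri}B\ne\varnothing$. Let $L=\operatorname{aff}(A\cup B)$ and $T=P_BR_A+\mathrm{Id}-P_A$. Then for every $\rho>0$ there exists $\kappa>0$ such that $\|x-Tx\|\ge\kappa\,d_{A\cap B}(x)$ for all $x\in L$ with $\|x\|\le\rho$.
   Context: $P_S$ is the metric projection onto a closed convex set $S$, $R_S=2P_S-\mathrm{Id}$, $d_S$ the distance function, $\operatorname{aff}$ the affine hull, $\operatorname{ri}$ the relative interior. *)

From mathcomp Require Import ssreflect ssrfun ssrbool eqtype ssrnat seq fintype bigop.
From Stdlib Require Import Reals List.
Open Scope R_scope.

(** The finite-dimensional real Hilbert space R^n with the standard vinner product. *)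
Definition vec (n : nat) := 'I_n -> R.

Definition vadd {n} (x y : vec n) : vec n := fun i => x i + y i.
Definition vsub {n} (x y : vec n) : vec n := fun i => x i - y i.
Definition vscale {n} (a : R) (x : vec n) : vec n := fun i => a * x i.
Definition vzero {n} : vec n := fun _ => 0.

Definition vinner {n} (x y : vec n) : R := \big[Rplus/0]_(i < n) (x i * y i).
Definition vnorm {n} (x : vec n) : R := sqrt (vinner x x).

Definition rn_closed {n} (S : vec n -> Prop) : Prop :=
  forall x, (forall eps, 0 < eps -> exists y, S y /\ vnorm (vsub x y) < eps) -> S x.

Definition rn_convex {n} (S : vec n -> Prop) : Prop :=
  forall x y t, S x -> S y -> 0 <= t <= 1 ->
    S (vadd (vscale t x) (vscale (1 - t) y)).

Definition affhull {n} (S : vec n -> Prop) (x : vec n) : Prop :=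
  exists l : list (R * vec n),
    Forall (fun p => S (snd p)) l /\
    fold_right Rplus 0 (map fst l) = 1 /\
    x = fold_right (fun p acc => vadd (vscale (fst p) (snd p)) acc) vzero l.

Definition relint {n} (S : vec n -> Prop) (x : vec n) : Prop :=
  S x /\ exists eps, 0 < eps /\
    forall y, affhull S y -> vnorm (vsub y x) < eps -> S y.

Definition is_proj {n} (S : vec n -> Prop) (x p : vec n) : Prop :=
  S p /\ forall y, S y -> vnorm (vsub x p) <= vnorm (vsub x y).

Definition is_dist {n} (S : vec n -> Prop) (x : vec n) (d : R) : Prop :=
  (forall y, S y -> d <= vnorm (vsub x y)) /\
  (forall e, (forall y, S y -> e <= vnorm (vsub x y)) -> e <= d).

Definition reflector {n} (P : vec n -> vec n) (x : vec n) : vec n :=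
  vsub (vscale 2 (P x)) x.

Definition DR_op {n} (PA PB : vec n -> vec n) (x : vec n) : vec n :=
  vsub (vadd (PB (reflector PA x)) x) (PA x).

(* Fix z0 in ri A /\ ri B.  Let V_A, V_B be the spans of A - z0 and B - z0, represented as
   row spaces of finite families of directions (a family of maximal rank spans).  Then
   L - z0 = V_A + V_B, relative interiority gives z0 + w in A for w in V_A with |w| <= eps
   (likewise for B), and finite dimensionality gives a constant K such that every y in
   V_A + V_B splits as y = p + q with p in V_A, q in V_B and |p|, |q| <= K |y|.

   With a = P_A x and b = P_B (R_A x) we have x - T x = a - b.  Splitting x - a = p + q and
   testing the variational inequalities of P_A at z0 + t p and of P_B at z0 - t q bounds
   |x - a| by a multiple of |a - b|.  Splitting a - b = p + q, a suitable convex combination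
   of a with z0 - mu p (in A) equals the same combination of b with z0 + mu q (in B); this
   point of A /\ B lies within a multiple of |a - b| of a.  All constants depend only on
   |x - z0| <= rho + |z0|. *)

From Stdlib Require Import Reals Lra FunctionalExtensionality Classical List Wf_nat.
From mathcomp Require Import ssreflect ssrfun ssrbool eqtype ssrnat seq fintype bigop.
From mathcomp Require Import ssralg matrix mxalgebra Rstruct zify.
Open Scope R_scope.

Ltac vec_ext := apply: functional_extensionality => j; rewrite /vadd /vsub /vscale /vzero /=.

Lemma Rdiv_le_1 a b : 0 < b -> a <= b -> a / b <= 1.
Proof. by move=> b_gt0 ab; apply: (Rmult_le_reg_r b) => //; rewrite /Rdiv Rmult_assoc Rinv_l; lra. Qed.

Lemma sumR_ge0 (I : finType) (F : I -> R) :
  (forall i, 0 <= F i) -> 0 <= \big[Rplus/0]_(i : I) F i.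
Proof. by move=> F_ge0; apply: big_ind => // [|a b]; lra. Qed.

Lemma sumR_le (I : finType) (F G : I -> R) :
  (forall i, F i <= G i) -> \big[Rplus/0]_(i : I) F i <= \big[Rplus/0]_(i : I) G i.
Proof. by move=> FG; apply: big_ind2 => // [|a b c d]; lra. Qed.

Section InnerProduct.
Context {n : nat}.
Implicit Types x y z : vec n.

Lemma vinner_sym x y : vinner x y = vinner y x.
Proof. by apply: eq_bigr => i _; rewrite Rmult_comm. Qed.

Lemma vinner_addl x y z : vinner (vadd x y) z = vinner x z + vinner y z.
Proof. rewrite /vinner -big_split; apply: eq_bigr => i _; rewrite /vadd /=; ring. Qed.

Lemma vinner_scalel c x y : vinner (vscale c x) y = c * vinner x y.
Proof. rewrite /vinner big_distrr; apply: eq_bigr => i _; rewrite /vscale /=; ring. Qed.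

Lemma vinner_subl x y z : vinner (vsub x y) z = vinner x z - vinner y z.
Proof.
have -> : vsub x y = vadd x (vscale (-1) y) by vec_ext; ring.
rewrite vinner_addl vinner_scalel; ring.
Qed.

Lemma vinner_addr x y z : vinner z (vadd x y) = vinner z x + vinner z y.
Proof. by rewrite vinner_sym vinner_addl !(vinner_sym z). Qed.

Lemma vinner_subr x y z : vinner z (vsub x y) = vinner z x - vinner z y.
Proof. by rewrite vinner_sym vinner_subl !(vinner_sym z). Qed.

Lemma vinner_scaler c x y : vinner y (vscale c x) = c * vinner y x.
Proof. by rewrite vinner_sym vinner_scalel (vinner_sym y). Qed.

Lemma vinner_ge0 x : 0 <= vinner x x.
Proof. by apply: sumR_ge0 => i; nra. Qed.

Lemma vnorm_ge0 x : 0 <= vnorm x.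
Proof. exact: sqrt_pos. Qed.

Lemma vnorm_sq x : vnorm x * vnorm x = vinner x x.
Proof. exact/sqrt_sqrt/vinner_ge0. Qed.

Lemma vnorm_le_sq x m : 0 <= m -> vinner x x <= m * m -> vnorm x <= m.
Proof. by move=> m_ge0 le; rewrite /vnorm -(sqrt_square m) //; apply: sqrt_le_1_alt. Qed.

Lemma vnorm_eq0 x : vnorm x = 0 -> x = vzero.
Proof.
move=> x0; apply: functional_extensionality => j; rewrite /vzero.
have : x j * x j <= vinner x x.
  rewrite /vinner (bigD1 j) //=.
  rewrite -{1}[x j * x j]Rplus_0_r; apply: Rplus_le_compat_l.
  by apply: big_ind => // [|a b|i _]; [lra | lra | nra].
rewrite -vnorm_sq x0; nra.
Qed.

Lemma vinner0l y : vinner vzero y = 0.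
Proof. by rewrite /vinner big1 // => i _; rewrite /vzero Rmult_0_l. Qed.

Lemma vinner_sub_scale x y t : vinner (vsub x (vscale t y)) (vsub x (vscale t y)) =
  vinner x x - 2 * t * vinner x y + t * t * vinner y y.
Proof.
rewrite vinner_subl !vinner_subr !vinner_scalel !vinner_scaler (vinner_sym y x); ring.
Qed.

Lemma vinner_le x y : vinner x y <= vnorm x * vnorm y.
Proof.
case: (Req_dec (vnorm x) 0) => [/vnorm_eq0 -> | x_neq0].
  by rewrite vinner0l; have := vnorm_ge0 vzero; have := vnorm_ge0 y; nra.
case: (Req_dec (vnorm y) 0) => [/vnorm_eq0 -> | y_neq0].
  by rewrite vinner_sym vinner0l; have := vnorm_ge0 x; have := vnorm_ge0 vzero; nra.
have x_gt0 : 0 < vnorm x by have := vnorm_ge0 x; lra.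
have y_gt0 : 0 < vnorm y by have := vnorm_ge0 y; lra.
(* expand [0 <= |y - t x|^2] at the minimizing [t = |y| / |x|] *)
set t := vnorm y / vnorm x.
have t_gt0 : 0 < t by exact: Rdiv_lt_0_compat.
have := vinner_ge0 (vsub y (vscale t x)); rewrite vinner_sub_scale -!vnorm_sq (vinner_sym y x).
have -> : t * t * (vnorm x * vnorm x) = vnorm y * vnorm y by rewrite /t; field; lra.
have E : t * (vnorm x * vnorm y) = vnorm y * vnorm y by rewrite /t; field; lra.
by move=> H; apply: (Rmult_le_reg_l t) => //; lra.
Qed.

Lemma vinner_ge x y : - (vnorm x * vnorm y) <= vinner x y.
Proof.
have := vinner_le (vscale (-1) x) y.
have -> : vnorm (vscale (-1) x) = vnorm x.
  by rewrite /vnorm vinner_scalel vinner_scaler; congr sqrt; ring.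
rewrite vinner_scalel; lra.
Qed.

Lemma vnorm_scale c x : vnorm (vscale c x) = Rabs c * vnorm x.
Proof.
rewrite /vnorm vinner_scalel vinner_scaler -Rmult_assoc sqrt_mult.
- by rewrite -/(Rsqr c) sqrt_Rsqr_abs.
- exact: Rle_0_sqr.
- exact: vinner_ge0.
Qed.

Lemma vnorm_add_le x y : vnorm (vadd x y) <= vnorm x + vnorm y.
Proof.
apply: vnorm_le_sq; first by have := vnorm_ge0 x; have := vnorm_ge0 y; lra.
rewrite vinner_addl !vinner_addr -!vnorm_sq (vinner_sym y x); have := vinner_le x y; nra.
Qed.

Lemma vnorm_subC x y : vnorm (vsub x y) = vnorm (vsub y x).
Proof.
have -> : vsub x y = vscale (-1) (vsub y x) by vec_ext; ring.
by rewrite vnorm_scale Rabs_Ropp Rabs_R1 Rmult_1_l.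
Qed.

Lemma vnorm_sub_le_add x y : vnorm (vsub x y) <= vnorm x + vnorm y.
Proof.
have -> : vsub x y = vadd x (vscale (-1) y) by vec_ext; ring.
by apply: Rle_trans (vnorm_add_le _ _) _; rewrite vnorm_scale Rabs_Ropp Rabs_R1; lra.
Qed.

Lemma vnorm_sub_le x y z : vnorm (vsub x z) <= vnorm (vsub x y) + vnorm (vsub y z).
Proof.
have -> : vsub x z = vadd (vsub x y) (vsub y z) by vec_ext; ring.
exact: vnorm_add_le.
Qed.

Lemma vnorm_convex_comb_le x y t : 0 <= t <= 1 ->
  vnorm (vadd (vscale t x) (vscale (1 - t) y)) <= t * vnorm x + (1 - t) * vnorm y.
Proof.
move=> ht; apply: Rle_trans (vnorm_add_le _ _) _.
by rewrite !vnorm_scale !Rabs_right; lra.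
Qed.

Lemma proj_variational {S x p} : rn_convex S -> is_proj S x p ->
  forall y, S y -> vinner (vsub x p) (vsub y p) <= 0.
Proof.
move=> S_cvx [Sp p_min] y Sy.
set w := vsub x p; set d := vsub y p; set g := vinner w d; set D := vinner d d.
(* moving from [p] towards [y] never gets closer to [x] *)
have step t : 0 < t <= 1 -> 2 * g <= t * D.
  move=> ht; have := p_min _ (S_cvx y p t Sy Sp ltac:(lra)).
  have -> : vsub x (vadd (vscale t y) (vscale (1 - t) p)) = vsub w (vscale t d).
    by rewrite /w /d; vec_ext; ring.
  rewrite -/w => le; have sq := Rmult_le_compat _ _ _ _ (vnorm_ge0 w) (vnorm_ge0 w) le le.
  rewrite !vnorm_sq vinner_sub_scale -/g -/D in sq.
  by apply: (Rmult_le_reg_l t); nra.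
have D_ge0 : 0 <= D by exact: vinner_ge0.
apply: Rnot_lt_le => g_gt0.
have t_pos : 0 < g / (g + D) by apply: Rdiv_lt_0_compat; lra.
have := step _ (conj t_pos (@Rdiv_le_1 g (g + D) ltac:(lra) ltac:(lra))).
have : g / (g + D) * (g + D) = g by field; lra.
nra.
Qed.

Lemma proj_near_anchor {S x p z} : is_proj S x p -> S z ->
  vnorm (vsub p z) <= 2 * vnorm (vsub x z).
Proof.
move=> [_ p_min] Sz; have := p_min z Sz.
have := vnorm_sub_le p x z; rewrite (vnorm_subC p x); lra.
Qed.

End InnerProduct.

Section RowVectors.
Context {n : nat}.
Implicit Types x y : vec n.

Definition rowv x : 'rV[R]_n := \row_j x j.

Lemma rowv_inj : injective rowv.
Proof.
move=> x y E; apply: functional_extensionality => j.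
by have := congr1 (fun r : 'rV_n => r ord0 j) E; rewrite !mxE.
Qed.

Lemma rowv0 : rowv vzero = 0%R.
Proof. by apply/rowP => j; rewrite !mxE. Qed.

Lemma rowv_add x y : rowv (vadd x y) = (rowv x + rowv y)%R.
Proof. by apply/rowP => j; rewrite !mxE. Qed.

Lemma rowv_scale c x : rowv (vscale c x) = (c *: rowv x)%R.
Proof. by apply/rowP => j; rewrite !mxE. Qed.

Lemma rowv_sub x y : rowv (vsub x y) = (rowv x - rowv y)%R.
Proof. by apply/rowP => j; rewrite !mxE. Qed.

Lemma rowv_sub_closed {m} {M : 'M[R]_(m, n)} x y :
  (rowv x <= M)%MS -> (rowv y <= M)%MS -> (rowv (vsub x y) <= M)%MS.
Proof. by move=> sx sy; rewrite rowv_sub addmx_sub // eqmx_opp. Qed.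

Lemma rowv_scale_closed {m} {M : 'M[R]_(m, n)} c x :
  (rowv x <= M)%MS -> (rowv (vscale c x) <= M)%MS.
Proof. by move=> sx; rewrite rowv_scale scalemx_sub. Qed.

End RowVectors.

Definition mxapp {p q} (x : vec p) (N : 'M[R]_(p, q)) : vec q :=
  fun j => vinner x (fun i => N i j).

Lemma rowv_mxapp p q (x : vec p) (N : 'M[R]_(p, q)) : rowv (mxapp x N) = (rowv x *m N)%R.
Proof. by apply/rowP => j; rewrite !mxE; apply: eq_bigr => i _; rewrite !mxE. Qed.

Lemma mxapp_bounded p q (N : 'M[R]_(p, q)) :
  exists K, 0 < K /\ forall x, vnorm (mxapp x N) <= K * vnorm x.
Proof.
(* [K] exceeds the Frobenius norm of [N], by Cauchy-Schwarz on each column *)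
set F := \big[Rplus/0]_(j < q) vinner (fun i => N i j) (fun i => N i j).
have F_ge0 : 0 <= F by apply: sumR_ge0 => j; exact: vinner_ge0.
have sF := sqrt_pos F.
exists (sqrt F + 1); split; first lra.
move=> x; have x_ge0 := vnorm_ge0 x.
apply: Rle_trans (_ : sqrt F * vnorm x <= _); last nra.
apply: vnorm_le_sq; first nra.
have -> : sqrt F * vnorm x * (sqrt F * vnorm x) = vnorm x * vnorm x * F.
  by rewrite -{3}(sqrt_sqrt F F_ge0); ring.
rewrite /F big_distrr; apply: sumR_le => j /=.
rewrite -vnorm_sq /mxapp.
have := vinner_le x (fun i => N i j); have := vinner_ge x (fun i => N i j).
have := vnorm_ge0 (fun i => N i j); nra.
Qed.

Lemma rowspace_sum_decomposition n m1 m2 (MA : 'M[R]_(m1, n)) (MB : 'M[R]_(m2, n)) :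
  exists K, 0 < K /\ forall y, (rowv y <= MA + MB)%MS ->
    exists p q, (rowv p <= MA)%MS /\ (rowv q <= MB)%MS /\ y = vadd p q /\
                vnorm p <= K * vnorm y /\ vnorm q <= K * vnorm y.
Proof.
(* split the coefficients of [y] in the stacked family [MA; MB], computed by the pseudo-inverse *)
set P := pinvmx (col_mx MA MB).
have [KA [KA_gt0 boundA]] := @mxapp_bounded _ _ (lsubmx P *m MA)%R.
have [KB [KB_gt0 boundB]] := @mxapp_bounded _ _ (rsubmx P *m MB)%R.
exists (KA + KB); split; first lra.
move=> y; rewrite addsmxE => sy.
exists (mxapp y (lsubmx P *m MA)%R), (mxapp y (rsubmx P *m MB)%R).
have y_ge0 := vnorm_ge0 y.
split; first by rewrite rowv_mxapp mulmxA submxMl.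
split; first by rewrite rowv_mxapp mulmxA submxMl.
split.
  apply: rowv_inj; rewrite rowv_add !rowv_mxapp !mulmxA -mul_row_col -mul_mx_row.
  by rewrite hsubmxK mulmxKpV.
by split; [apply: Rle_trans (boundA y) _ | apply: Rle_trans (boundB y) _]; nra.
Qed.

Definition dirmx {n m} (z0 : vec n) (s : 'I_m -> vec n) : 'M[R]_(m, n) :=
  \matrix_(i, j) (s i j - z0 j).

Definition affcomb {n} (l : list (R * vec n)) : vec n :=
  fold_right (fun p acc => vadd (vscale (fst p) (snd p)) acc) vzero l.

Section Direction.
Context {n : nat}.
Variables (S : vec n -> Prop) (z0 : vec n).

Lemma affhull_sub_rowspace m (M : 'M[R]_(m, n)) :
  (forall t, S t -> (rowv (vsub t z0) <= M)%MS) ->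
  forall x, affhull S x -> (rowv (vsub x z0) <= M)%MS.
Proof.
move=> dirS x [l [Sl [wsum ->]]].
(* an affine combination minus its total weight times [z0] is a combination of directions *)
have comb_dir : forall l, Forall (fun p => S (snd p)) l ->
    (rowv (vsub (affcomb l) (vscale (fold_right Rplus 0 (map fst l)) z0)) <= M)%MS.
  elim=> [|[c t] l' IH] /= Sl'.
    have -> : vsub vzero (vscale 0 z0) = vzero by vec_ext; ring.
    by rewrite rowv0 sub0mx.
  inversion Sl' as [|? ? St Sl'']; subst.
  have -> : vsub (vadd (vscale c t) (affcomb l')) (vscale (c + fold_right Rplus 0 (map fst l')) z0)
          = vadd (vscale c (vsub t z0)) (vsub (affcomb l') (vscale (fold_right Rplus 0 (map fst l')) z0)).
    by vec_ext; ring.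
  by rewrite rowv_add rowv_scale addmx_sub ?scalemx_sub ?dirS ?IH.
have := comb_dir l Sl; rewrite wsum.
by have -> : vscale 1 z0 = z0 by vec_ext; ring.
Qed.

Lemma affcomb_map I (g : I -> R * vec n) (r : seq I) :
  affcomb (map g r) = fun j => \big[Rplus/0]_(i <- r) ((g i).1 * (g i).2 j).
Proof.
elim: r => [|i r IH] /=; first by vec_ext; rewrite big_nil.
by rewrite IH; vec_ext; rewrite big_cons.
Qed.

Lemma weights_map I (g : I -> R * vec n) (r : seq I) :
  fold_right Rplus 0 (map fst (map g r)) = \big[Rplus/0]_(i <- r) (g i).1.
Proof. by elim: r => [|i r IH] /=; rewrite ?big_nil ?big_cons ?IH. Qed.

Lemma affhull_dirmx m (c : vec m) (s : 'I_m -> vec n) :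
  S z0 -> (forall i, S (s i)) -> affhull S (vadd z0 (mxapp c (dirmx z0 s))).
Proof.
move=> Sz0 Ss.
exists ((1 - \big[Rplus/0]_(i < m) c i, z0) :: map (fun i => (c i, s i)) (index_enum 'I_m)).
split; [|split].
- constructor => //; apply/Forall_forall => p /in_map_iff [i [<- _]]; exact: Ss.
- by rewrite /= weights_map /= /Rminus Rplus_assoc Rplus_opp_l Rplus_0_r.
- change (fold_right _ vzero ?l) with (affcomb l) => /=.
  have -> : affcomb [seq (c i, s i) | i <- index_enum 'I_m] =
            fun j => \big[Rplus/0]_(i < m) (c i * s i j) by exact: affcomb_map.
  vec_ext; rewrite /mxapp /vinner [X in _ + X = _](eq_bigr (fun i => c i * s i j + c i * (- z0 j))).
    by rewrite big_split /= -big_distrl /=; lra.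
  by move=> i _; rewrite mxE; ring.
Qed.

Lemma max_rank_family : exists m (s : 'I_m -> vec n), (forall i, S (s i)) /\
  forall m' (s' : 'I_m' -> vec n), (forall i, S (s' i)) ->
    (\rank (dirmx z0 s') <= \rank (dirmx z0 s))%N.
Proof.
(* minimize the corank [n - rank], a natural number *)
pose P k := exists m (s : 'I_m -> vec n), (forall i, S (s i)) /\ (n - \rank (dirmx z0 s))%N = k.
have P_inh : exists k, P k by exists (n - \rank (dirmx z0 (fun _ : 'I_0 => z0)))%N, 0%N, (fun _ => z0); split => // -[].
have [k [[[m [s [Ss <-]]] k_min] _]] :=
  dec_inh_nat_subset_has_unique_least_element P (fun k => classic (P k)) P_inh.
exists m, s; split => // m' s' Ss'.
have := k_min _ (ex_intro _ m' (ex_intro _ s' (conj Ss' erefl))).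
have := rank_leq_col (dirmx z0 s'); have := rank_leq_col (dirmx z0 s); lia.
Qed.

Lemma dirmx_snoc m (s : 'I_m -> vec n) t :
  dirmx z0 (fun i : 'I_(m + 1) => if split i is inl k then s k else t) =
  col_mx (dirmx z0 s) (rowv (vsub t z0)).
Proof. by apply/matrixP => i j; rewrite !mxE; case: (split i) => k; rewrite !mxE. Qed.

Lemma max_rank_family_spans m (s : 'I_m -> vec n) : (forall i, S (s i)) ->
  (forall m' (s' : 'I_m' -> vec n), (forall i, S (s' i)) ->
    (\rank (dirmx z0 s') <= \rank (dirmx z0 s))%N) ->
  forall t, S t -> (rowv (vsub t z0) <= dirmx z0 s)%MS.
Proof.
move=> Ss s_max t St.
have Ss_t : forall i : 'I_(m + 1), S (if split i is inl k then s k else t).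
  by move=> i; case: (split i).
have := s_max _ _ Ss_t; rewrite dirmx_snoc => rank_le.
have := submx_refl (col_mx (dirmx z0 s) (rowv (vsub t z0))).
rewrite col_mx_sub => /andP [sub_s _].
have [_ eq_rank] := mxrank_leqif_sup sub_s.
have : (col_mx (dirmx z0 s) (rowv (vsub t z0)) <= dirmx z0 s)%MS.
  by rewrite -eq_rank eqn_leq rank_le mxrankS.
by rewrite col_mx_sub => /andP [].
Qed.

Lemma direction_rowspace : S z0 -> exists m (M : 'M[R]_(m, n)),
  (forall t, S t -> (rowv (vsub t z0) <= M)%MS) /\
  (forall w, (rowv w <= M)%MS -> affhull S (vadd z0 w)).
Proof.
move=> Sz0; have [m [s [Ss s_max]]] := max_rank_family.
exists m, (dirmx z0 s); split; first exact: max_rank_family_spans.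
move=> w /submxP [D Dw].
have -> : w = mxapp (fun i => D ord0 i) (dirmx z0 s).
  apply: rowv_inj; rewrite Dw rowv_mxapp; congr (_ *m _)%R.
  by apply/rowP => i; rewrite !mxE (ord1 ord0).
exact: affhull_dirmx.
Qed.

End Direction.

Section LinearRegularity.
Context {n : nat}.
Context {A B : vec n -> Prop} {z0 : vec n} {eps K : R} {W WA WB : vec n -> Prop}.
Hypotheses (A_cvx : rn_convex A) (B_cvx : rn_convex B) (Az0 : A z0) (Bz0 : B z0).
Hypotheses (eps_gt0 : 0 < eps) (K_gt0 : 0 < K).
Hypothesis WA_scale : forall t w, WA w -> WA (vscale t w).
Hypothesis WB_scale : forall t w, WB w -> WB (vscale t w).
Hypothesis A_ball : forall w, WA w -> vnorm w <= eps -> A (vadd z0 w).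
Hypothesis B_ball : forall w, WB w -> vnorm w <= eps -> B (vadd z0 w).
Hypothesis W_sub : forall x y, W x -> W y -> W (vsub x y).
Hypothesis W_A : forall t, A t -> W (vsub t z0).
Hypothesis W_B : forall t, B t -> W (vsub t z0).
Hypothesis W_decomp : forall y, W y -> exists p q, WA p /\ WB q /\ y = vadd p q /\
  vnorm p <= K * vnorm y /\ vnorm q <= K * vnorm y.

Lemma A_step c p s : WA p -> vnorm p <= K * s -> Rabs c * (K * s) <= eps ->
  A (vadd z0 (vscale c p)).
Proof.
move=> WAp p_le c_le; apply: A_ball; first exact: WA_scale.
by rewrite vnorm_scale; have := Rabs_pos c; nra.
Qed.

Lemma B_step c q s : WB q -> vnorm q <= K * s -> Rabs c * (K * s) <= eps ->
  B (vadd z0 (vscale c q)).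
Proof.
move=> WBq q_le c_le; apply: B_ball; first exact: WB_scale.
by rewrite vnorm_scale; have := Rabs_pos c; nra.
Qed.

Lemma W_diff a b : A a -> B b -> W (vsub a b).
Proof.
move=> Aa Bb; have -> : vsub a b = vsub (vsub a z0) (vsub b z0) by vec_ext; ring.
by apply: W_sub; [exact: W_A | exact: W_B].
Qed.

Lemma common_point_near a b : A a -> B b -> exists c, A c /\ B c /\
  vnorm (vsub a c) <= K * (vnorm (vsub a z0) + eps) / eps * vnorm (vsub a b).
Proof.
move=> Aa Bb; set dl := vnorm (vsub a b); set ra := vnorm (vsub a z0).
have [p [q [WAp [WBq [Eab [p_le q_le]]]]]] := W_decomp _ (W_diff _ _ Aa Bb).
rewrite -/dl in p_le q_le.
have dl_ge0 : 0 <= dl by exact: vnorm_ge0.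
have ra_ge0 : 0 <= ra by exact: vnorm_ge0.
case: (Req_dec dl 0) => [dl0 | dl_neq0].
  have a_eq_b : a = b.
    apply: functional_extensionality => j.
    by have := congr1 (fun f => f j) (vnorm_eq0 _ dl0); rewrite /vsub /vzero; lra.
  exists a; split => //; split; first by rewrite a_eq_b.
  rewrite dl0 Rmult_0_r; suff -> : vsub a a = vsub a b by rewrite -/dl; lra.
  by rewrite -a_eq_b.
(* [c] is the convex combination of [a] with a point [z0 - mu p] of [A] near [z0],
   which by the choice [lam * mu = 1 - lam] is also the combination of [b] with [z0 + mu q] *)
have dl_gt0 : 0 < dl by lra.
set mu := eps / (K * dl); set lam := K * dl / (K * dl + eps).
have mu_gt0 : 0 < mu by apply: Rdiv_lt_0_compat; nra.
have lam_gt0 : 0 < lam by apply: Rdiv_lt_0_compat; nra.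
have lam_le1 : lam <= 1 by apply: Rdiv_le_1; nra.
have lam_mu : lam * mu = 1 - lam by rewrite /lam /mu; field; nra.
have lam_le : lam <= K * dl / eps.
  by rewrite /lam /Rdiv; apply: Rmult_le_compat_l; [nra | apply: Rinv_le_contravar; nra].
have mu_step : mu * (K * dl) <= eps by rewrite /mu; right; field; nra.
set c := vadd (vscale lam (vadd z0 (vscale (- mu) p))) (vscale (1 - lam) a).
exists c; split; [|split].
- apply: A_cvx; last lra; last exact: Aa.
  by apply: (A_step _ _ dl) => //; rewrite Rabs_Ropp Rabs_right; lra.
- have -> : c = vadd (vscale lam (vadd z0 (vscale mu q))) (vscale (1 - lam) b).
    apply: functional_extensionality => j.
    have := congr1 (fun f => f j) Eab; rewrite /c /vadd /vsub /vscale => Eabj.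
    by rewrite -lam_mu (_ : a j = b j + p j + q j); [ring | lra].
  apply: B_cvx; last lra; last exact: Bb.
  by apply: (B_step _ _ dl) => //; rewrite Rabs_right; lra.
- have -> : vsub a c = vadd (vscale lam (vsub a z0)) (vscale (lam * mu) p).
    by rewrite /c; vec_ext; ring.
  rewrite lam_mu; apply: Rle_trans (vnorm_convex_comb_le _ _ _ (conj (Rlt_le _ _ lam_gt0) lam_le1)) _.
  have lam_ra : lam * ra <= K * dl / eps * ra by apply: Rmult_le_compat_r.
  have lam_p : (1 - lam) * vnorm p <= K * dl by have := vnorm_ge0 p; nra.
  have -> : K * (ra + eps) / eps * dl = K * dl / eps * ra + K * dl by field; lra.
  by rewrite -/ra; lra.
Qed.

Lemma residual_bound x a b :
  is_proj A x a -> is_proj B (vsub (vscale 2 a) x) b -> W (vsub x z0) ->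
  vnorm (vsub x a) <= K * (7 * vnorm (vsub x z0) + eps) / eps * vnorm (vsub a b).
Proof.
move=> Pa Pb Wx; set r := vsub (vscale 2 a) x.
set R0 := vnorm (vsub x z0); set dl := vnorm (vsub a b).
set u := vsub x a; set v := vsub r b.
have dl_ge0 : 0 <= dl by exact: vnorm_ge0.
have a_near : vnorm (vsub a z0) <= 2 * R0 by exact: proj_near_anchor Pa Az0.
have v_le : vnorm v <= 5 * R0.
  apply: Rle_trans (proj2 Pb z0 Bz0) _.
  have -> : vsub r z0 = vadd (vscale 2 (vsub a z0)) (vscale (-1) (vsub x z0)) by rewrite /r; vec_ext; ring.
  apply: Rle_trans (vnorm_add_le _ _) _.
  by rewrite !vnorm_scale Rabs_Ropp Rabs_R1 Rabs_right -/R0; lra.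
have uv : vsub a b = vadd u v by rewrite /u /v /r; vec_ext; ring.
have Wu : W u.
  have -> : u = vsub (vsub x z0) (vsub a z0) by rewrite /u; vec_ext; ring.
  by apply: W_sub => //; apply: W_A; case: Pa.
have [p [q [WAp [WBq [Eu [p_le q_le]]]]]] := W_decomp _ Wu.
set nu := vnorm u in p_le q_le *.
have nu_ge0 : 0 <= nu by exact: vnorm_ge0.
have R0_ge0 : 0 <= R0 by exact: vnorm_ge0.
case: (Req_dec nu 0) => [-> | nu_neq0].
  by apply: Rmult_le_pos => //; apply: Rmult_le_pos; [apply: Rmult_le_pos; lra | apply/Rlt_le/Rinv_0_lt_compat].
(* test the variational inequalities at [z0 + t p] in [A] and [z0 - t q] in [B], with [t |u| K = eps] *)
set t := eps / (K * nu).
have t_gt0 : 0 < t by apply: Rdiv_lt_0_compat; nra.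
have t_nu : t * (K * nu) = eps by rewrite /t; field; lra.
have Ap : A (vadd z0 (vscale t p)) by apply: (A_step _ _ nu) => //; rewrite Rabs_right; lra.
have Bq : B (vadd z0 (vscale (- t) q)).
  by apply: (B_step _ _ nu) => //; rewrite Rabs_Ropp Rabs_right; lra.
have viA : t * vinner u p <= vinner u (vsub a z0).
  have := proj_variational A_cvx Pa _ Ap.
  have -> : vsub (vadd z0 (vscale t p)) a = vsub (vscale t p) (vsub a z0) by vec_ext; ring.
  by rewrite vinner_subr vinner_scaler -/u; lra.
have viB : - t * vinner v q <= vinner v (vsub b z0).
  have := proj_variational B_cvx Pb _ Bq.
  have -> : vsub (vadd z0 (vscale (- t) q)) b = vsub (vscale (- t) q) (vsub b z0) by vec_ext; ring.
  by rewrite vinner_subr vinner_scaler -/v; lra.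
have uu : vinner u u = vinner u p + vinner (vsub a b) q - vinner v q.
  have -> : vinner (vsub a b) q = vinner u q + vinner v q by rewrite uv vinner_addl.
  by rewrite {2}Eu vinner_addr; ring.
have cross : vinner u (vsub a z0) + vinner v (vsub b z0) =
             vinner (vsub a b) (vsub a z0) - vinner v (vsub a b).
  have -> : vsub b z0 = vsub (vsub a z0) (vsub a b) by vec_ext; ring.
  by rewrite [vinner v _]vinner_subr uv vinner_addl; ring.
have abq : vinner (vsub a b) q <= dl * (K * nu).
  by apply: Rle_trans (vinner_le _ _) _; apply: Rmult_le_compat_l.
have aba : vinner (vsub a b) (vsub a z0) <= dl * (2 * R0).
  by apply: Rle_trans (vinner_le _ _) _; apply: Rmult_le_compat_l.
have vab : - vinner v (vsub a b) <= 5 * R0 * dl.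
  by have := vinner_ge v (vsub a b); have := vnorm_ge0 v; rewrite -/dl; nra.
have key : eps / K * nu <= 7 * R0 * dl + eps * dl.
  have -> : eps / K * nu = t * vinner u u by rewrite -vnorm_sq -/nu /t; field; lra.
  have := Rmult_le_compat_l t _ _ (Rlt_le _ _ t_gt0) abq.
  have -> : t * (dl * (K * nu)) = dl * eps by rewrite -t_nu; ring.
  rewrite uu; lra.
apply: (Rmult_le_reg_l (eps / K)); first exact: Rdiv_lt_0_compat.
by have -> : eps / K * (K * (7 * R0 + eps) / eps * dl) = 7 * R0 * dl + eps * dl by field; lra.
Qed.

Lemma DR_residual_controls_distance (PA PB : vec n -> vec n) x :
  is_proj A x (PA x) -> is_proj B (reflector PA x) (PB (reflector PA x)) -> W (vsub x z0) ->
  exists c, A c /\ B c /\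
    vnorm (vsub x c) <= K * (9 * vnorm (vsub x z0) + 2 * eps) / eps * vnorm (vsub x (DR_op PA PB x)).
Proof.
move=> Pa Pb Wx; set a := PA x; set b := PB (reflector PA x).
have -> : vsub x (DR_op PA PB x) = vsub a b by rewrite /a /b /DR_op; vec_ext; ring.
have [c [Ac [Bc ac_le]]] := common_point_near _ _ (proj1 Pa) (proj1 Pb).
rewrite -/a -/b in ac_le.
exists c; split => //; split => //.
have xa_le := residual_bound _ _ _ Pa Pb Wx; rewrite -/a -/b in xa_le.
have a_near : vnorm (vsub a z0) <= 2 * vnorm (vsub x z0) by exact: proj_near_anchor Pa Az0.
have ac_le' : vnorm (vsub a c) <= K * (2 * vnorm (vsub x z0) + eps) / eps * vnorm (vsub a b).
  apply: Rle_trans ac_le _; apply: Rmult_le_compat_r; first exact: vnorm_ge0.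
  by rewrite /Rdiv; apply: Rmult_le_compat_r; [apply/Rlt_le/Rinv_0_lt_compat | nra].
apply: Rle_trans (vnorm_sub_le _ a _) _.
have -> : K * (9 * vnorm (vsub x z0) + 2 * eps) / eps * vnorm (vsub a b) =
  K * (7 * vnorm (vsub x z0) + eps) / eps * vnorm (vsub a b) +
  K * (2 * vnorm (vsub x z0) + eps) / eps * vnorm (vsub a b) by field; lra.
lra.
Qed.

End LinearRegularity.

Lemma DR_error_bound n (A B : vec n -> Prop) (PA PB : vec n -> vec n) z0 :
  rn_convex A -> rn_convex B -> relint A z0 -> relint B z0 ->
  (forall x, is_proj A x (PA x)) -> (forall x, is_proj B x (PB x)) ->
  exists K eps, 0 < K /\ 0 < eps /\
    forall x, affhull (fun y => A y \/ B y) x -> exists c, A c /\ B c /\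
      vnorm (vsub x c) <= K * (9 * vnorm (vsub x z0) + 2 * eps) / eps * vnorm (vsub x (DR_op PA PB x)).
Proof.
move=> A_cvx B_cvx [Az0 [eA [eA_gt0 relA]]] [Bz0 [eB [eB_gt0 relB]]] PA_proj PB_proj.
have [mA [MA [dirA affA]]] := direction_rowspace A z0 Az0.
have [mB [MB [dirB affB]]] := direction_rowspace B z0 Bz0.
have [K [K_gt0 decomp]] := rowspace_sum_decomposition _ _ _ MA MB.
set eps := Rmin eA eB / 2.
have eps_gt0 : 0 < eps by rewrite /eps; have := Rmin_glb_lt _ _ _ eA_gt0 eB_gt0; lra.
have ball S e m (M : 'M[R]_(m, n)) : (forall w, (rowv w <= M)%MS -> affhull S (vadd z0 w)) ->
    (forall y, affhull S y -> vnorm (vsub y z0) < e -> S y) -> eps < e ->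
    forall w, (rowv w <= M)%MS -> vnorm w <= eps -> S (vadd z0 w).
  move=> aff rel eps_lt w Mw w_le; apply: rel; first exact: aff.
  have -> : vsub (vadd z0 w) z0 = w by vec_ext; ring.
  lra.
have dirAB t : A t \/ B t -> (rowv (vsub t z0) <= MA + MB)%MS.
  case=> [/dirA | /dirB] sub; apply: submx_trans sub _; [exact: addsmxSl | exact: addsmxSr].
exists K, eps; split => //; split => // x Lx.
apply: (DR_residual_controls_distance (W := fun y => (rowv y <= MA + MB)%MS)
  (WA := fun w => (rowv w <= MA)%MS) (WB := fun w => (rowv w <= MB)%MS)) => //.
- exact: rowv_scale_closed.
- exact: rowv_scale_closed.
- by apply: ball affA relA _; rewrite /eps; have := Rmin_l eA eB; lra.
- by apply: ball affB relB _; rewrite /eps; have := Rmin_r eA eB; lra.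
- exact: rowv_sub_closed.
- by move=> t At; apply: dirAB; left.
- by move=> t Bt; apply: dirAB; right.
- exact: affhull_sub_rowspace dirAB _ Lx.
Qed.

Theorem lemma4p3 (n : nat) (A B : vec n -> Prop) (PA PB : vec n -> vec n)
  (hAc : rn_closed A) (hAv : rn_convex A)
  (hBc : rn_closed B) (hBv : rn_convex B)
  (hri : exists z, relint A z /\ relint B z)
  (hPA : forall x, is_proj A x (PA x))
  (hPB : forall x, is_proj B x (PB x)) :
  forall rho, 0 < rho ->
    exists kappa, 0 < kappa /\
      forall x, affhull (fun y => A y \/ B y) x -> vnorm x <= rho ->
        forall d, is_dist (fun y => A y /\ B y) x d ->
          kappa * d <= vnorm (vsub x (DR_op PA PB x)).
Proof.
move=> rho rho_gt0; case: hri => z0 [riA riB].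
have [K [eps [K_gt0 [eps_gt0 err]]]] := DR_error_bound _ _ _ PA PB _ hAv hBv riA riB hPA hPB.
set C := K * (9 * (rho + vnorm z0) + 2 * eps) / eps.
have C_gt0 : 0 < C.
  by apply: Rdiv_lt_0_compat => //; apply: Rmult_lt_0_compat => //; have := vnorm_ge0 z0; lra.
exists (/ C); split; first exact: Rinv_0_lt_compat.
move=> x Lx x_le d [d_le _]; have [c [Ac [Bc xc_le]]] := err x Lx.
have d_le_C : d <= C * vnorm (vsub x (DR_op PA PB x)).
  apply: Rle_trans (d_le _ (conj Ac Bc)) _; apply: Rle_trans xc_le _.
  apply: Rmult_le_compat_r; first exact: vnorm_ge0.
  rewrite /C /Rdiv; apply: Rmult_le_compat_r; first exact/Rlt_le/Rinv_0_lt_compat.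
  by have := vnorm_sub_le_add x z0; nra.
by apply: (Rmult_le_reg_l C) => //; rewrite -Rmult_assoc Rinv_r; lra.
Qed.
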